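(* Let $\mathcal I=\mathbb R^d$, $\mathcal T$ its unit sphere, $\mathcal G$ a compact Abelian group with normalized Haar measure $dg$ acting on $\mathcal I$ by a unitary representation, and $\mathcal G_0\subset\mathcal G$ measurable with $V=\int_{\mathcal G_0}dg>0$. For $I\in\mathcal I$, $\bar g\in\mathcal G$ let $\rho_{I,\bar g}$ be the probability measure on $\mathcal I$ given by $\rho_{I,\bar g}(A)=\frac1V\int_{\{g\in\bar g\mathcal G_0:\ gI\in A\}}dg$. For $t\in\mathcal T$ and a probability measure $\rho$ on $\mathcal I$, let $\rho^t$ be its pushforward to $\mathbb R$ under $I\mapsto\langle I,t\rangle$. Define the TP-POG representation $\bar\Psi(I):\mathcal G\times\mathcal T\to\mathcal P(\mathbb R)$ by $\bar\Psi(I)(g,t)=(\rho_{I,g})^t$. Then $\bar\Psi$ is covariant: for all $I\in\mathcal I$, $\tilde g,g\in\mathcal G$, $t\in\mathcal T$, $$\bar\Psi(\tilde gI)(g,t)=\bar\Psi(I)(\tilde gg,t).$$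
   Context: $\bar g\mathcal G_0=\{\bar g g': g'\in\mathcal G_0\}$; $\mathcal P(\mathbb R)$ is the set of Borel probability measures on $\mathbb R$. *)

From HB Require Import structures.
From mathcomp Require Import all_boot all_order all_algebra.
From mathcomp Require Import all_classical all_reals all_analysis.
Set Implicit Arguments. Unset Strict Implicit. Unset Printing Implicit Defensive.
Import Order.TTheory GRing.Theory Num.Theory.
Import numFieldNormedType.Exports.
Local Open Scope classical_set_scope.
Local Open Scope ring_scope.

(* The Borel sigma-algebra of a topological abelian group G
   (the group is written additively: g h is g + h, the unit is 0). *)
Definition gcar (G : topologicalZmodType) : Type := G.
HB.instance Definition _ (G : topologicalZmodType) := Choice.on (gcar G).
HB.instance Definition _ (G : topologicalZmodType) :=
  isPointed.Build (gcar G) (0 : G).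
Notation borelG G := (g_sigma_algebraType (@open G : set (set (gcar G)))).

Definition haar_invariant (R : realType) (G : topologicalZmodType)
  (mu : set (borelG G) -> \bar R) : Prop :=
  forall (x : G) (A : set G), measurable (A : set (borelG G)) ->
    mu [set x + a | a in A] = mu A.

(* A unitary (orthogonal) continuous representation of G on R^d,
   vectors being column vectors, g I := pi g *m I. *)
Definition unitary_rep (R : realType) (G : topologicalZmodType) (d : nat)
  (pi : G -> 'M[R]_d) : Prop :=
  [/\ pi 0 = 1%:M,
      forall g h : G, pi (g + h) = pi g *m pi h,
      forall g : G, pi g *m (pi g)^T = 1%:M
    & forall i j : 'I_d, continuous (fun g : G => pi g i j)].

Definition inner (R : realType) (d : nat) (I t : 'cV[R]_d) : R :=
  \sum_(i < d) I i 0 * t i 0.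

Definition unit_sphere (R : realType) (d : nat) : set 'cV[R]_d :=
  [set t | inner t t = 1].

Definition coset (G : topologicalZmodType) (gbar : G) (G0 : set G) : set G :=
  [set gbar + g' | g' in G0].

Definition rho (R : realType) (G : topologicalZmodType) (d : nat)
  (mu : set (borelG G) -> \bar R) (pi : G -> 'M[R]_d) (G0 : set G)
  (I : 'cV[R]_d) (gbar : G) : set 'cV[R]_d -> \bar R :=
  fun A => (((fine (mu G0))^-1)%:E *
           mu [set g : G | coset gbar G0 g /\ A (pi g *m I)])%E.

Definition push_t (R : realType) (d : nat) (rho : set 'cV[R]_d -> \bar R)
  (t : 'cV[R]_d) : set R -> \bar R :=
  fun B => rho ((fun J => inner J t) @^-1` B).

Definition Psibar (R : realType) (G : topologicalZmodType) (d : nat)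
  (mu : set (borelG G) -> \bar R) (pi : G -> 'M[R]_d) (G0 : set G)
  (I : 'cV[R]_d) (g : G) (t : 'cV[R]_d) : set R -> \bar R :=
  push_t (rho mu pi G0 I g) t.

From HB Require Import structures.
From mathcomp Require Import all_boot all_order all_algebra.
From mathcomp Require Import all_classical all_reals all_analysis.
From mathcomp Require Import measurable_realfun.
Import Order.TTheory GRing.Theory Num.Theory.
Import numFieldNormedType.Exports.
Local Open Scope classical_set_scope.
Local Open Scope ring_scope.

(* Since g (gt I) = (g + gt) I, the set of g in the coset g0 + G0 with
   g (gt I) in A is, up to translation by gt, the set of g in the coset
   gt + g0 + G0 with g I in A; Haar invariance of dg then gives
   rho_{gt I, g0} = rho_{I, gt + g0}, and pushing forward along <., t>
   preserves the equality. *)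

Section BorelMeasurability.
Variables (R : realType) (G : topologicalZmodType).

Lemma continuous_measurable_borelG (f : G -> R) : continuous f ->
  measurable_fun (setT : set (borelG G)) f.
Proof.
move=> /continuousP cf.
apply: (measurability _ (RGenOpens.measurableE R)).
move=> _ [_ [a [b ->] <-]]; apply: measurableI => //.
apply: sub_sigma_algebra; apply: cf; exact: interval_open.
Qed.

Lemma continuous_measurable_borelG_endo (f : G -> G) : continuous f ->
  measurable_fun (setT : set (borelG G)) (f : borelG G -> borelG G).
Proof.
move=> /continuousP cf.
apply: (@measurability _ _ (borelG G) (borelG G) setT _
  (@open G : set (set (gcar G))) erefl).
by move=> _ [B oB <-]; apply: measurableI => //; apply: sub_sigma_algebra; exact: cf.
Qed.

Lemma measurable_translate (x : G) (A : set G) :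
  measurable (A : set (borelG G)) ->
  measurable ([set x + a | a in A] : set (borelG G)).
Proof.
move=> mA.
have cont_subx : continuous (fun y : G => y - x).
  move=> y; apply: (@continuous_comp _ _ _ (fun y : G => (y, x))
    (fun p : G * G => p.1 - p.2)); last exact: sub_continuous.
  by apply: cvg_pair; [exact: cvg_id | exact: cvg_cst].
have := continuous_measurable_borelG_endo _ cont_subx measurableT _ mA.
rewrite setTI; congr measurable; apply/seteqP; split => y /=.
  by move=> Ay; exists (y - x) => //; rewrite addrC subrK.
by move=> [a Aa <-]; rewrite addrAC subrr add0r.
Qed.

Lemma measurable_inner_orbit (d : nat) (pi : G -> 'M[R]_d) (J t : 'cV[R]_d) :
  (forall i j : 'I_d, continuous (fun g : G => pi g i j)) ->
  measurable_fun (setT : set (borelG G)) (fun g : borelG G => inner (pi g *m J) t).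
Proof.
move=> cpi; apply: measurable_sum => i.
apply: (@measurable_funM _ _ _ _ (fun g : borelG G => (pi g *m J) i 0));
  last exact: measurable_cst.
under eq_fun do rewrite mxE.
apply: measurable_sum => j.
apply: (@measurable_funM _ _ _ _ (fun g : borelG G => pi g i j));
  last exact: measurable_cst.
exact: continuous_measurable_borelG.
Qed.

End BorelMeasurability.

Section Covariance.
Variables (R : realType) (d : nat) (G : topologicalZmodType).
Variables (mu : set (borelG G) -> \bar R) (pi : G -> 'M[R]_d) (G0 : set G).
Hypothesis piD : forall g h : G, pi (g + h) = pi g *m pi h.

Lemma translate_rho_support (I : 'cV[R]_d) (gt g0 : G) (A : set 'cV[R]_d) :
  [set gt + a | a in [set g | coset g0 G0 g /\ A (pi g *m (pi gt *m I))]] =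
  [set g | coset (gt + g0) G0 g /\ A (pi g *m I)].
Proof.
apply/seteqP; split => x /=.
  move=> [_ [[h G0h <-] Ah] <-]; split; first by exists h => //; rewrite addrA.
  by move: Ah; rewrite mulmxA -piD addrC.
move=> [[h G0h <-] Ax]; exists (g0 + h); last by rewrite addrA.
by split; [exists h | rewrite mulmxA -piD addrC addrA].
Qed.

Lemma rho_covariant (I : 'cV[R]_d) (gt g0 : G) (A : set 'cV[R]_d) :
  haar_invariant mu -> measurable (G0 : set (borelG G)) ->
  measurable ([set g : borelG G | A (pi g *m (pi gt *m I))]) ->
  rho mu pi G0 (pi gt *m I) g0 A = rho mu pi G0 I (gt + g0) A.
Proof.
move=> haar mG0 mA; rewrite /rho -translate_rho_support haar //.
apply: measurableI mA; exact: measurable_translate.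
Qed.

End Covariance.

Theorem theorem9 (R : realType) (d : nat) (G : topologicalZmodType)
  (mu : probability (borelG G) R) (pi : G -> 'M[R]_d) (G0 : set G) :
  hausdorff_space G -> compact [set: G] ->
  haar_invariant mu ->
  unitary_rep pi ->
  measurable (G0 : set (borelG G)) -> (0 < mu G0)%E ->
  forall (I : 'cV[R]_d) (gt g : G) (t : 'cV[R]_d), @unit_sphere R d t ->
  forall B : set R, measurable B ->
    Psibar mu pi G0 (pi gt *m I) g t B = Psibar mu pi G0 I (gt + g) t B.
Proof.
move=> _ _ haar [_ piD _ cpi] mG0 _ I gt g t _ B mB.
apply: (@rho_covariant R d G mu pi G0 piD) => //.
have := @measurable_inner_orbit R G d pi (pi gt *m I) t cpi measurableT B mB.
by rewrite setTI.
Qed.
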